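(* Let $B\ge 2$ and $G\ge 2$ be even integers. If $\min(B,G)\le 4$, then there is no balanced matrix $X\in\{-1,1\}^{G\times B}$ without collisions. If $B=G=6$ or $B=G=8$, then there exists a balanced matrix $X\in\{-1,1\}^{G\times B}$ without collisions.
   Context: Two vectors $v_1,v_2\in\{-1,1\}^k$ have a collision if $v_1=v_2$ or $v_1=-v_2$. A matrix $X\in\{-1,1\}^{n\times p}$ has no collisions if no two distinct rows of $X$ have a collision and no two distinct columns of $X$ have a collision. A matrix $X\in\{-1,1\}^{n\times p}$ is balanced if each of its rows sums to $0$ and each of its columns sums to $0$. *)

From mathcomp Require Import all_boot all_order all_algebra.
Set Implicit Arguments. Unset Strict Implicit. Unset Printing Implicit Defensive.
Import Order.TTheory GRing.Theory Num.Theory.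
Local Open Scope ring_scope.

Definition pm1_matrix (n p : nat) (X : 'M[int]_(n, p)) : Prop :=
  forall i j, X i j = 1 \/ X i j = -1.

Definition collision (m k : nat) (v1 v2 : 'M[int]_(m, k)) : Prop :=
  v1 = v2 \/ v1 = - v2.

Definition no_collisions (n p : nat) (X : 'M[int]_(n, p)) : Prop :=
  (forall i1 i2 : 'I_n, i1 <> i2 -> ~ collision (row i1 X) (row i2 X)) /\
  (forall j1 j2 : 'I_p, j1 <> j2 -> ~ collision (col j1 X) (col j2 X)).

Definition balanced (n p : nat) (X : 'M[int]_(n, p)) : Prop :=
  (forall i : 'I_n, \sum_(j < p) X i j = 0) /\
  (forall j : 'I_p, \sum_(i < n) X i j = 0).

From mathcomp Require Import all_boot all_order all_algebra zify.
Set Implicit Arguments. Unset Strict Implicit. Unset Printing Implicit Defensive.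
Import Order.TTheory GRing.Theory Num.Theory.
Local Open Scope ring_scope.

(* Normalising a row by its entry in a fixed column j0, a +-1 row with zero
   sum is determined up to sign by its sign pattern, the set of columns where
   it agrees with column j0: a set of size p/2 containing j0.  Hence a matrix
   with p columns and no two colliding rows has at most C(p-1, p/2-1) rows.
   For p = 2 and p = 4 this bound is 1 and 3, less than p; transposing if
   necessary we may assume that the smaller dimension counts the columns,
   which rules out min(B, G) <= 4.  The 6x6 and 8x8 examples are explicit
   matrices checked by computation. *)

Lemma card_sets_containing_le (T : finType) (x : T) (k : nat) :
  (#|[set A : {set T} | (x \in A) && (#|A| == k)]| <= 'C(#|T|.-1, k.-1))%N.
Proof.
have inj_D1 : {in [set A : {set T} | (x \in A) && (#|A| == k)] &,
                injective (fun A => A :\ x)}.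
  move=> A B; rewrite !inE => /andP[xA _] /andP[xB _] eqAB.
  by rewrite -(setD1K xA) -(setD1K xB) eqAB.
rewrite -(cardsC1 x) -cards_draws -(card_in_imset inj_D1).
apply/subset_leq_card/subsetP => _ /imsetP[A /[!inE] /andP[xA /eqP cardA] ->].
apply/andP; split; first by apply/subsetP => y /[!inE] /andP[].
by rewrite -cardA (cardsD1 x A) xA.
Qed.

Lemma card_eq_pm1_sum0 p (v : 'I_p -> int) (j0 : 'I_p) :
  (forall j, v j = 1 \/ v j = -1) -> \sum_j v j = 0 ->
  #|[set j | v j == v j0]| = p./2.
Proof.
move=> pmv.
set A := [set j | v j == v j0].
have vA j : v j = if j \in A then v j0 else - v j0.
  by rewrite inE; case: (pmv j) => ->; case: (pmv j0) => ->.
rewrite (eq_bigr _ (fun j _ => vA j)) (bigID (mem A)) /=.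
rewrite [X in X + _](eq_bigr (fun=> v j0)) => [|j ->] //.
rewrite [X in _ + X](eq_bigr (fun=> - v j0)) => [|j /negPf ->] //.
under [X in _ + X = _]eq_bigl do rewrite -in_setC.
have vj0_neq0 : v j0 != 0 by case: (pmv j0) => ->.
rewrite !sumr_const mulNrn => /eqP; rewrite subr_eq0.
move=> /eqP /(mulrIn vj0_neq0) cardAC.
have := cardsC A; rewrite card_ord -cardAC addnn => cardA2.
by rewrite -[X in X./2]cardA2 doubleK.
Qed.

Lemma pm1_mulr_eq (x y z w : int) :
  x = 1 \/ x = -1 -> y = 1 \/ y = -1 -> z = 1 \/ z = -1 -> w = 1 \/ w = -1 ->
  (x == y) = (z == w) -> x * y = z * w.
Proof. by do 4 case=> ->. Qed.

Lemma collision_pm1_scale m k (c : int) (v : 'M[int]_(m, k)) :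
  c = 1 \/ c = -1 -> collision (c *: v) v.
Proof. by case=> ->; [left; rewrite scale1r | right; rewrite scaleN1r]. Qed.

Definition zero_row_sums n p (X : 'M[int]_(n, p)) : Prop :=
  forall i, \sum_j X i j = 0.

Definition row_collision_free n p (X : 'M[int]_(n, p)) : Prop :=
  forall i1 i2 : 'I_n, i1 <> i2 -> ~ collision (row i1 X) (row i2 X).

Section SignPatterns.

Variables (n p : nat) (X : 'M[int]_(n, p)) (j0 : 'I_p).
Hypothesis pmX : pm1_matrix X.

Definition sign_pattern (i : 'I_n) : {set 'I_p} := [set j | X i j == X i j0].

Lemma sign_pattern_collision i1 i2 :
  sign_pattern i1 = sign_pattern i2 -> collision (row i1 X) (row i2 X).
Proof.
move=> /setP eq_pat.
have sq1 i : X i j0 * X i j0 = 1 by case: (pmX i j0) => ->.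
have -> : row i1 X = (X i1 j0 * X i2 j0) *: row i2 X.
  apply/rowP => j; rewrite !mxE.
  have := eq_pat j; rewrite !inE.
  move=> /(pm1_mulr_eq (pmX i1 j) (pmX i1 j0) (pmX i2 j) (pmX i2 j0)) eq_prod.
  by rewrite -[LHS]mulr1 -(sq1 i1) mulrA eq_prod mulrC [X i2 j * _]mulrC mulrA.
apply: collision_pm1_scale.
by case: (pmX i1 j0) => ->; case: (pmX i2 j0) => ->; [left|right|right|left].
Qed.

Hypothesis sumX : zero_row_sums X.

Lemma card_sign_pattern i : #|sign_pattern i| = p./2.
Proof. exact: card_eq_pm1_sum0 (pmX i) (sumX i). Qed.

Lemma row_collision_free_card_le :
  row_collision_free X -> (n <= 'C(p.-1, (p./2).-1))%N.
Proof.
move=> freeX.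
have inj_pat : injective sign_pattern.
  move=> i1 i2 eq_pat; case: (eqVneq i1 i2) => // /eqP ne.
  by case: (freeX _ _ ne); apply: sign_pattern_collision.
have := card_sets_containing_le j0 (p./2); rewrite card_ord; apply: leq_trans.
rewrite -{1}[n]card_ord -(card_imset 'I_n inj_pat).
apply/subset_leq_card/subsetP => _ /imsetP[i _ ->].
by rewrite inE card_sign_pattern eqxx andbT inE.
Qed.

End SignPatterns.

Lemma collision_tr m k (u v : 'M[int]_(m, k)) : collision u^T v^T <-> collision u v.
Proof.
split=> -[] eq_uv.
- by left; apply: trmx_inj.
- by right; apply: trmx_inj; rewrite eq_uv linearN.
- by left; rewrite eq_uv.
- by right; rewrite eq_uv linearN.
Qed.

Lemma balancedE n p (X : 'M[int]_(n, p)) :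
  balanced X <-> zero_row_sums X /\ zero_row_sums X^T.
Proof.
have colE j : \sum_i X^T j i = \sum_i X i j by apply: eq_bigr => i _; rewrite mxE.
by split=> -[rows cols]; split=> // j; rewrite ?colE // -colE.
Qed.

Lemma no_collisionsE n p (X : 'M[int]_(n, p)) :
  no_collisions X <-> row_collision_free X /\ row_collision_free X^T.
Proof.
have colE j1 j2 :
    collision (col j1 X) (col j2 X) <-> collision (row j1 X^T) (row j2 X^T).
  by rewrite -!tr_col; apply: iff_sym; apply: collision_tr.
split=> -[rows cols]; split=> // j1 j2 ne /colE; exact: cols.
Qed.

Lemma pm1_matrix_tr n p (X : 'M[int]_(n, p)) : pm1_matrix X -> pm1_matrix X^T.
Proof. by move=> pmX i j; rewrite mxE. Qed.

Lemma balanced_tr n p (X : 'M[int]_(n, p)) : balanced X -> balanced X^T.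
Proof. by move=> /balancedE[rows cols]; apply/balancedE; rewrite trmxK. Qed.

Lemma no_collisions_tr n p (X : 'M[int]_(n, p)) : no_collisions X -> no_collisions X^T.
Proof. by move=> /no_collisionsE[rows cols]; apply/no_collisionsE; rewrite trmxK. Qed.

Lemma binomial_half_lt q : (2 <= q <= 4)%N -> ~~ odd q -> ('C(q.-1, (q./2).-1) < q)%N.
Proof. by case: q => [|[|[|[|[|q]]]]]. Qed.

Lemma narrow_balanced_has_collision n p (X : 'M[int]_(n, p)) :
  (2 <= p <= 4)%N -> ~~ odd p -> (p <= n)%N ->
  pm1_matrix X -> balanced X -> ~ no_collisions X.
Proof.
move=> p_range p_even le_pn pmX [sumX _] [freeX _].
have p_gt0 : (0 < p)%N by case/andP: p_range => /ltnW.
have := row_collision_free_card_le (Ordinal p_gt0) pmX sumX freeX.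
have := binomial_half_lt p_range p_even.
lia.
Qed.

Definition table_mx n p (t : nat -> nat -> int) : 'M[int]_(n, p) := \matrix_(i, j) t i j.

Definition transpose_table (t : nat -> nat -> int) i j := t j i.

Lemma trmx_table_mx n p t : (table_mx n p t)^T = table_mx p n (transpose_table t).
Proof. by apply/matrixP => i j; rewrite !mxE. Qed.

Definition pm1_table n p (t : nat -> nat -> int) : bool :=
  all (fun i => all (fun j => (t i j == 1) || (t i j == -1)) (iota 0 p)) (iota 0 n).

Definition zero_row_sums_table n p (t : nat -> nat -> int) : bool :=
  all (fun i => \sum_(j <- iota 0 p) t i j == 0) (iota 0 n).

Definition row_collision_free_table n p (t : nat -> nat -> int) : bool :=
  all (fun i1 => all (fun i2 => (i1 != i2) ==>
         has (fun j => t i1 j != t i2 j) (iota 0 p) &&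
         has (fun j => t i1 j != - t i2 j) (iota 0 p)) (iota 0 n)) (iota 0 n).

Lemma mem_iota_ord m (i : 'I_m) : (i : nat) \in iota 0 m.
Proof. by rewrite mem_iota /=. Qed.

Lemma pm1_table_mx n p t : pm1_table n p t -> pm1_matrix (table_mx n p t).
Proof.
move=> /allP pm_t i j; rewrite mxE.
by case/orP: (allP (pm_t _ (mem_iota_ord i)) _ (mem_iota_ord j)) => /eqP; [left|right].
Qed.

Lemma zero_row_sums_table_mx n p t :
  zero_row_sums_table n p t -> zero_row_sums (table_mx n p t).
Proof.
move=> /allP sum_t i; apply/eqP.
rewrite (eq_bigr (fun j : 'I_p => t i j)) => [|j _]; last by rewrite mxE.
by rewrite -(big_mkord xpredT (t i)) /index_iota subn0 sum_t ?mem_iota_ord.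
Qed.

Lemma row_collision_free_table_mx n p t :
  row_collision_free_table n p t -> row_collision_free (table_mx n p t).
Proof.
move=> /allP free_t i1 i2 ne.
have /implyP := allP (free_t _ (mem_iota_ord i1)) _ (mem_iota_ord i2).
case/(_ _)/andP => [|/hasP[j j_lt neq_j] /hasP[k k_lt neq_k]].
  by apply: contra_not_neq ne => /val_inj.
rewrite !mem_iota /= in j_lt k_lt.
case=> /rowP eq_row.
- by move: (eq_row (Ordinal j_lt)); rewrite !mxE => /eqP; rewrite (negbTE neq_j).
- by move: (eq_row (Ordinal k_lt)); rewrite !mxE => /eqP; rewrite (negbTE neq_k).
Qed.

Definition balanced_collision_free_table n p t : bool :=
  [&& pm1_table n p t,
      zero_row_sums_table n p t, zero_row_sums_table p n (transpose_table t),
      row_collision_free_table n p t & row_collision_free_table p n (transpose_table t)].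

Lemma balanced_collision_free_table_mx n p t :
  balanced_collision_free_table n p t ->
  exists X : 'M[int]_(n, p), pm1_matrix X /\ balanced X /\ no_collisions X.
Proof.
case/and5P=> pm_t rows_t cols_t free_rows_t free_cols_t.
exists (table_mx n p t); split; first exact: pm1_table_mx.
split; [apply/balancedE | apply/no_collisionsE]; rewrite trmx_table_mx.
  by split; apply: zero_row_sums_table_mx.
by split; apply: row_collision_free_table_mx.
Qed.

Definition seq_table (s : seq (seq int)) i j : int := nth 0 (nth [::] s i) j.

Definition M6 : seq (seq int) :=
  [:: [:: -1;  1;  1; -1;  1; -1];
      [::  1; -1;  1;  1; -1; -1];
      [::  1; -1;  1; -1; -1;  1];
      [::  1;  1; -1; -1;  1; -1];
      [:: -1; -1; -1;  1;  1;  1];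
      [:: -1;  1; -1;  1; -1;  1]].

Definition M8 : seq (seq int) :=
  [:: [:: -1;  1;  1; -1; -1; -1;  1;  1];
      [:: -1;  1; -1;  1;  1; -1;  1; -1];
      [:: -1; -1;  1; -1;  1;  1;  1; -1];
      [::  1;  1; -1; -1; -1; -1;  1;  1];
      [:: -1; -1;  1;  1;  1; -1; -1;  1];
      [::  1;  1; -1; -1;  1;  1; -1; -1];
      [::  1; -1;  1;  1; -1;  1; -1; -1];
      [::  1; -1; -1;  1; -1;  1; -1;  1]].

Lemma M6_balanced_collision_free : balanced_collision_free_table 6 6 (seq_table M6).
Proof. by rewrite /balanced_collision_free_table /zero_row_sums_table unlock; vm_compute. Qed.

Lemma M8_balanced_collision_free : balanced_collision_free_table 8 8 (seq_table M8).
Proof. by rewrite /balanced_collision_free_table /zero_row_sums_table unlock; vm_compute. Qed.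

Theorem theorem2 :
  (forall B G : nat, (2 <= B)%N -> (2 <= G)%N -> ~~ odd B -> ~~ odd G ->
     (minn B G <= 4)%N ->
     ~ (exists X : 'M[int]_(G, B), pm1_matrix X /\ balanced X /\ no_collisions X)) /\
  (forall B G : nat, ((B == 6) && (G == 6) \/ (B == 8) && (G == 8))%N ->
     exists X : 'M[int]_(G, B), pm1_matrix X /\ balanced X /\ no_collisions X).
Proof.
split.
- move=> B G B_ge2 G_ge2 B_even G_even min_le4 [X [pmX [balX ncX]]].
  case: (leqP B G) => [le_BG | lt_GB].
  + apply: (narrow_balanced_has_collision _ B_even le_BG pmX balX ncX); lia.
  + apply: (narrow_balanced_has_collision _ G_even (ltnW lt_GB)
             (pm1_matrix_tr pmX) (balanced_tr balX) (no_collisions_tr ncX)); lia.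
- move=> B G [/andP[/eqP-> /eqP->] | /andP[/eqP-> /eqP->]].
  + exact: balanced_collision_free_table_mx M6_balanced_collision_free.
  + exact: balanced_collision_free_table_mx M8_balanced_collision_free.
Qed.
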